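(* Let $q=p^h$ with $p$ an odd prime. In ${\rm PG}(4,q)$ with homogeneous coordinates $(X_1,\dots,X_5)$, let $\pi$ be the plane $X_4=X_5=0$, let $\ell$ be the line $X_3=X_4=X_5=0$, let $\omega$ be a primitive element of ${\rm GF}(q)$, and for $1\le i\le q+1$ let $\Pi_i$ be the solid with equation $X_4=\omega^{i-1}X_5$ if $1\le i\le q-1$, $X_4=0$ if $i=q$, and $X_5=0$ if $i=q+1$. Let $a,b,c\in{\rm GF}(q)$ be such that $X^3+aX^2+bX+c$ is irreducible over ${\rm GF}(q)$, and let $G=\{M_{r,s,t}: r,s,t\in{\rm GF}(q)\}$ where $$M_{r,s,t}=\begin{pmatrix}1&0&r&r^2-ar+s&t\\0&1&s&2rs-t&s^2+bs-cr\\0&0&1&2r&2s\\0&0&0&1&0\\0&0&0&0&1\end{pmatrix},$$ acting on ${\rm PG}(4,q)$ (points written as column vectors) by left multiplication. Then the orbits of $G$ on the lines of ${\rm PG}(4,q)$ distinct from $\ell$ are the following: (a) $q+1$ orbits of size $q$: for each point $P\in\ell$, the set of lines of $\pi$ through $P$ other than $\ell$; (b) $(q+1)^2$ orbits of size $q^2$: for each $i\in\{1,\dots,q+1\}$ and each point $P\in\ell$, the set of lines of $\Pi_i$ through $P$ not contained in $\pi$; (c) $q(q+1)$ orbits of size $q^3$: for each $i$, the lines of $\Pi_i$ that are skew to $\ell$ but meet $\pi$ in a point form $q$ orbits of size $q^3$; (d) $q^3$ orbits of size $q^3$, whose union is the set of lines disjoint from $\pi$. Moreover, each orbit of type (d)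 is a partial line spread, i.e. its lines are pairwise disjoint. *)

From HB Require Import structures.
From mathcomp Require Import all_boot all_order all_algebra all_field.
Set Implicit Arguments. Unset Strict Implicit. Unset Printing Implicit Defensive.
Import GRing.Theory.
Local Open Scope ring_scope.

(* PG(4,q) over a finite field F: vectors are column vectors 'cV[F]_5,
   coordinates X1..X5 are the entries with (0-based) row indices 0..4.
   A projective subspace is represented by the finite set of vectors of the
   underlying vector subspace (including 0). *)

Notation vec F := 'cV[F]_5.

Definition coord (F : finFieldType) (x : vec F) (k : nat) : F := x (inord k) 0.

Definition span1 (F : finFieldType) (x : vec F) : {set vec F} :=
  [set a *: x | a : F].
Definition span2 (F : finFieldType) (u v : vec F) : {set vec F} :=
  [set a *: u + b *: v | a : F, b : F].
Definition indep2 (F : finFieldType) (u v : vec F) : bool :=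
  [forall a : F, forall b : F, (a *: u + b *: v == 0) ==> (a == 0) && (b == 0)].

Definition points (F : finFieldType) : {set {set vec F}} :=
  [set S | [exists x : vec F, (x != 0) && (S == span1 x)]].
Definition lines (F : finFieldType) : {set {set vec F}} :=
  [set S | [exists u : vec F, exists v : vec F, indep2 u v && (S == span2 u v)]].

(* the zero subspace (empty projective subspace) *)
Definition zero_sp (F : finFieldType) : {set vec F} := [set 0].

Definition pi_pl (F : finFieldType) : {set vec F} :=
  [set x : vec F | (coord x 3 == 0) && (coord x 4 == 0)].
Definition ell (F : finFieldType) : {set vec F} :=
  [set x : vec F | [&& coord x 2 == 0, coord x 3 == 0 & coord x 4 == 0]].

Definition solid (F : finFieldType) (w : F) (i : nat) : {set vec F} :=
  if (i < #|F|)%N then [set x : vec F | coord x 3 == w ^+ i.-1 * coord x 4]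
  else if i == #|F| then [set x : vec F | coord x 3 == 0]
  else [set x : vec F | coord x 4 == 0].

Definition Mrst (F : finFieldType) (a b c r s t : F) : 'M[F]_5 :=
  \matrix_(i < 5, j < 5)
    nth 0 (nth [::]
      [:: [:: 1; 0; r; r ^+ 2 - a * r + s; t];
          [:: 0; 1; s; 2 * r * s - t; s ^+ 2 + b * s - c * r];
          [:: 0; 0; 1; 2 * r; 2 * s];
          [:: 0; 0; 0; 1; 0];
          [:: 0; 0; 0; 0; 1]] i) j.

Definition Gset (F : finFieldType) (a b c : F) : {set 'M[F]_5} :=
  [set g | [exists r : F, exists s : F, exists t : F, g == Mrst a b c r s t]].

Definition act (F : finFieldType) (g : 'M[F]_5) (S : {set vec F}) : {set vec F} :=
  [set g *m x | x in S].

Definition orbit (F : finFieldType) (a b c : F) (L : {set vec F}) :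
  {set {set vec F}} := [set act g L | g in Gset a b c].

Definition line_orbits (F : finFieldType) (a b c : F) : {set {set {set vec F}}} :=
  [set orbit a b c L | L in lines F :\ ell F].

Definition ell_points (F : finFieldType) : {set {set vec F}} :=
  [set P in points F | P \subset ell F].

Definition typeA (F : finFieldType) (P : {set vec F}) : {set {set vec F}} :=
  [set L in lines F | [&& L \subset pi_pl F, P \subset L & L != ell F]].
Definition typeB (F : finFieldType) (w : F) (i : nat) (P : {set vec F}) :
  {set {set vec F}} :=
  [set L in lines F | [&& L \subset solid w i, P \subset L & ~~ (L \subset pi_pl F)]].
Definition typeC (F : finFieldType) (w : F) (i : nat) : {set {set vec F}} :=
  [set L in lines F | [&& L \subset solid w i, L :&: ell F == zero_sp F
                        & L :&: pi_pl F \in points F]].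
Definition typeD (F : finFieldType) : {set {set vec F}} :=
  [set L in lines F | L :&: pi_pl F == zero_sp F].

Definition partial_spread (F : finFieldType) (O : {set {set vec F}}) : Prop :=
  forall L1 L2, L1 \in O -> L2 \in O -> L1 != L2 -> L1 :&: L2 = zero_sp F.

(* Elementary changes of basis
   bring every line other than ell to one of four normal forms, according to how it
   meets pi and ell: a line of pi through a point of ell (a), a line through a point
   of ell in a solid Pi_i but not in pi (b), a line of Pi_i meeting pi in one point
   off ell (c), a line disjoint from pi (d).  Since
   M_{r,s,t} M_{r',s',t'} = M_{r+r',s+s',t+t'+2rs'}, the group G acts on the
   parameters of each normal form by explicit substitutions.  It is transitive on
   the lines of type (a), and on those of type (b), through a given point; for the
   solid X4 = l X5 and the point (1,-l,0,0,0) this uses that the cubic has no root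
   l.  On the lines of type (c) in a solid, and on those of type (d), G acts
   freely, with one and with three invariants respectively, so they split into q
   and q^3 orbits of size q^3.  Finally, as the cubic has no roots, a nontrivial
   M_{r,s,t} fixes no vector outside pi, so two distinct lines of a type (d) orbit
   meet only in 0. *)

From Pilot Require Import Defs.
From HB Require Import structures.
From mathcomp Require Import all_boot all_order all_algebra all_field.
From mathcomp Require Import ring zify.

Set Implicit Arguments.
Unset Strict Implicit.
Unset Printing Implicit Defensive.
Import GRing.Theory.
Local Open Scope ring_scope.

(* [coord] of vector.v would otherwise hide the coordinate function of Defs. *)
Local Notation coord := Defs.coord.

Section Coordinates.
Variable F : finFieldType.

Definition col5 (x0 x1 x2 x3 x4 : F) : vec F :=
  \col_(i < 5) nth 0 [:: x0; x1; x2; x3; x4] i.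

Lemma col5_coord (x : vec F) :
  x = col5 (coord x 0) (coord x 1) (coord x 2) (coord x 3) (coord x 4).
Proof.
apply/matrixP => i j; rewrite ord1 !mxE /coord.
by case: i => [[|[|[|[|[|i]]]]] Hi] //=; congr (x _ _); apply/val_inj; rewrite /= inordK.
Qed.

Lemma coord_col5 x0 x1 x2 x3 x4 :
  [/\ coord (col5 x0 x1 x2 x3 x4) 0 = x0, coord (col5 x0 x1 x2 x3 x4) 1 = x1,
      coord (col5 x0 x1 x2 x3 x4) 2 = x2, coord (col5 x0 x1 x2 x3 x4) 3 = x3 &
      coord (col5 x0 x1 x2 x3 x4) 4 = x4].
Proof. by rewrite /coord !mxE !inordK. Qed.

Lemma col5_inj x0 x1 x2 x3 x4 y0 y1 y2 y3 y4 :
  col5 x0 x1 x2 x3 x4 = col5 y0 y1 y2 y3 y4 ->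
  [/\ x0 = y0, x1 = y1, x2 = y2, x3 = y3 & x4 = y4].
Proof.
move=> E; have := coord_col5 x0 x1 x2 x3 x4; rewrite E.
by case: (coord_col5 y0 y1 y2 y3 y4) => -> -> -> -> -> [].
Qed.

Lemma col5_0 : col5 0 0 0 0 0 = 0.
Proof. by apply/matrixP => i j; rewrite !mxE; case: i => [[|[|[|[|[|i]]]]] Hi]. Qed.

Lemma add_col5 x0 x1 x2 x3 x4 y0 y1 y2 y3 y4 :
  col5 x0 x1 x2 x3 x4 + col5 y0 y1 y2 y3 y4 =
  col5 (x0 + y0) (x1 + y1) (x2 + y2) (x3 + y3) (x4 + y4).
Proof. by apply/matrixP => i j; rewrite !mxE; case: i => [[|[|[|[|[|i]]]]] Hi]. Qed.

Lemma scale_col5 k x0 x1 x2 x3 x4 :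
  k *: col5 x0 x1 x2 x3 x4 = col5 (k * x0) (k * x1) (k * x2) (k * x3) (k * x4).
Proof. by apply/matrixP => i j; rewrite !mxE; case: i => [[|[|[|[|[|i]]]]] Hi]. Qed.

Lemma lin_col5 k l x0 x1 x2 x3 x4 y0 y1 y2 y3 y4 :
  k *: col5 x0 x1 x2 x3 x4 + l *: col5 y0 y1 y2 y3 y4 =
  col5 (k * x0 + l * y0) (k * x1 + l * y1) (k * x2 + l * y2) (k * x3 + l * y3)
       (k * x4 + l * y4).
Proof. by rewrite !scale_col5 add_col5. Qed.

End Coordinates.

Section Subspaces.
Variable F : finFieldType.
Implicit Types u v x y : vec F.

Lemma span1P u x : reflect (exists k, x = k *: u) (x \in span1 u).
Proof. by apply: (iffP imsetP) => [[k _ ->]|[k ->]]; exists k. Qed.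

Lemma span2P u v x : reflect (exists k l, x = k *: u + l *: v) (x \in span2 u v).
Proof.
apply: (iffP imset2P) => [[k l _ _ ->]|[k [l ->]]]; first by exists k, l.
by exists k l.
Qed.

Lemma indep2P u v :
  reflect (forall k l, k *: u + l *: v = 0 -> k = 0 /\ l = 0) (indep2 u v).
Proof.
apply: (iffP forallP) => [H k l E|H k].
  move: (H k) => /forallP /(_ l) /implyP; rewrite E eqxx.
  by move=> /(_ isT) /andP [/eqP -> /eqP ->].
by apply/forallP => l; apply/implyP => /eqP /H [-> ->]; rewrite eqxx.
Qed.

Lemma indep2_comb_neq0 u v k l :
  indep2 u v -> (k != 0) || (l != 0) -> k *: u + l *: v != 0.
Proof.
by move=> /indep2P H kl; apply/eqP => /H [k0 l0]; move: kl; rewrite k0 l0 eqxx.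
Qed.

Lemma indep2C u v : indep2 u v -> indep2 v u.
Proof. by move=> /indep2P H; apply/indep2P => k l; rewrite addrC => /H [-> ->]. Qed.

Lemma card_span2 u v : indep2 u v -> #|span2 u v| = (#|F| ^ 2)%N.
Proof.
move/indep2P => H.
have -> : span2 u v = [set p.1 *: u + p.2 *: v | p : F * F].
  apply/setP => z; apply/span2P/imsetP => [[k [l ->]]|[[k l] _ ->]].
    by exists (k, l).
  by exists k, l.
rewrite card_imset ?card_prod ?expnS ?expn0 ?muln1 //.
move=> [k l] [k' l'] /= E; have /H [/eqP] : (k - k') *: u + (l - l') *: v = 0.
  by rewrite !scalerBl addrACA E -opprD subrr.
by rewrite subr_eq0 => /eqP -> /eqP; rewrite subr_eq0 => /eqP ->.
Qed.

Lemma mem_span2l u v : u \in span2 u v.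
Proof. by apply/span2P; exists 1, 0; rewrite scale1r scale0r addr0. Qed.

Lemma mem_span2r u v : v \in span2 u v.
Proof. by apply/span2P; exists 0, 1; rewrite scale1r scale0r add0r. Qed.

Lemma mem_span2_0 u v : 0 \in span2 u v.
Proof. by apply/span2P; exists 0, 0; rewrite !scale0r addr0. Qed.

Lemma span2_lin u v x y k l :
  x \in span2 u v -> y \in span2 u v -> k *: x + l *: y \in span2 u v.
Proof.
move=> /span2P [a [b ->]] /span2P [a' [b' ->]]; apply/span2P.
exists (k * a + l * a'), (k * b + l * b').
by rewrite !scalerDr !scalerA !scalerDl addrACA.
Qed.

Lemma span2_subset (S : {set vec F}) u v :
  (forall k l, k *: u + l *: v \in S) -> span2 u v \subset S.
Proof. by move=> H; apply/subsetP => z /span2P [k [l ->]]. Qed.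

Lemma span2_eq u v x y :
  indep2 u v -> indep2 x y -> x \in span2 u v -> y \in span2 u v ->
  span2 x y = span2 u v.
Proof.
move=> Iuv Ixy Hx Hy; apply/eqP.
rewrite eqEcard (card_span2 Iuv) (card_span2 Ixy) leqnn andbT.
by apply: span2_subset => k l; apply: span2_lin.
Qed.

Lemma span2C u v : span2 u v = span2 v u.
Proof.
apply/setP => z; apply/span2P/span2P => [[a [b ->]]|[a [b ->]]];
  by exists b, a; rewrite addrC.
Qed.

Lemma span2_shear u v k : span2 u (v + k *: u) = span2 u v.
Proof.
apply/setP => z; apply/span2P/span2P => [[a [b ->]]|[a [b ->]]].
  by exists (a + b * k), b; rewrite scalerDr scalerA scalerDl -addrA [b *: v + _]addrC.
by exists (a - b * k), b; rewrite scalerDr scalerA scalerBl [b *: v + _]addrC addrA subrK.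
Qed.

Lemma span2_scale u v k : k != 0 -> span2 u (k *: v) = span2 u v.
Proof.
move=> k0; apply/setP => z; apply/span2P/span2P => [[a [b ->]]|[a [b ->]]].
  by exists a, (b * k); rewrite scalerA.
by exists a, (b / k); rewrite scalerA mulfVK.
Qed.

Lemma mem_span1 x : x \in span1 x.
Proof. by apply/span1P; exists 1; rewrite scale1r. Qed.

Lemma span1_scale x k : k != 0 -> span1 (k *: x) = span1 x.
Proof.
move=> kn; apply/setP => z; apply/span1P/span1P => [[l ->]|[l ->]].
  by exists (l * k); rewrite scalerA.
by exists (l / k); rewrite scalerA mulfVK.
Qed.

Lemma span1_sub2 u v : span1 u \subset span2 u v.
Proof.
by apply/subsetP => z /span1P [k ->]; apply/span2P; exists k, 0; rewrite scale0r addr0.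
Qed.

Lemma act_span2 (g : 'M[F]_5) u v : act g (span2 u v) = span2 (g *m u) (g *m v).
Proof.
apply/setP => z; apply/imsetP/span2P => [[x /span2P [k [l ->]] ->]|[k [l ->]]].
  by exists k, l; rewrite mulmxDr !scalemxAr.
exists (k *: u + l *: v); last by rewrite mulmxDr !scalemxAr.
by apply/span2P; exists k, l.
Qed.

Lemma act_mul (g h : 'M[F]_5) (L : {set vec F}) : act h (act g L) = act (h *m g) L.
Proof. by rewrite /act -imset_comp; apply: eq_imset => x /=; rewrite mulmxA. Qed.

Lemma act1 (L : {set vec F}) : act 1%:M L = L.
Proof. by rewrite /act; under eq_imset do rewrite mul1mx; apply: imset_id. Qed.

Lemma linesP L : reflect (exists u v, indep2 u v /\ L = span2 u v) (L \in lines F).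
Proof.
rewrite inE; apply: (iffP existsP) => [[u /existsP [v /andP [I /eqP ->]]]|[u [v [I ->]]]].
  by exists u, v.
by exists u; apply/existsP; exists v; rewrite I eqxx.
Qed.

Lemma span2_line u v : indep2 u v -> span2 u v \in lines F.
Proof. by move=> I; apply/linesP; exists u, v. Qed.

Lemma pointP (S : {set vec F}) : S \in points F -> exists2 x, x != 0 & x \in S.
Proof.
by rewrite inE => /existsP [x /andP [xn /eqP ->]]; exists x => //; apply: mem_span1.
Qed.

Lemma zero_sp_notin_points : zero_sp F \notin points F.
Proof.
apply/negP => /pointP [x]; rewrite inE => /negPf xn0 /eqP x0.
by rewrite x0 eqxx in xn0.
Qed.

Lemma meet_zero_sp (L S : {set vec F}) x :
  L :&: S = zero_sp F -> x \in L -> x \in S -> x = 0.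
Proof.
move=> E xL xS; have : x \in L :&: S by rewrite inE xL xS.
by rewrite E inE => /eqP.
Qed.

Lemma neq_set_mem (L S : {set vec F}) x : x \in L -> x \notin S -> L != S.
Proof. by move=> xL; apply: contraNneq => <-. Qed.

End Subspaces.

Ltac simpr := rewrite ?(mulr0, mulr1, addr0, add0r, mul0r, mul1r, subr0, eqxx, oner_eq0,
  andbT, andbF).
Ltac field_nz := field; repeat match goal with |- is_true (_ && _) => apply/andP; split end;
  try done.

Section NormalForms.
Variable F : finFieldType.
Implicit Types (o d : option F).

Lemma mem_span2_col5 (x0 x1 x2 x3 x4 u0 u1 u2 u3 u4 v0 v1 v2 v3 v4 : F) :
  col5 x0 x1 x2 x3 x4 \in span2 (col5 u0 u1 u2 u3 u4) (col5 v0 v1 v2 v3 v4) ->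
  exists k l, [/\ x0 = k * u0 + l * v0, x1 = k * u1 + l * v1, x2 = k * u2 + l * v2,
     x3 = k * u3 + l * v3 & x4 = k * u4 + l * v4].
Proof. by move/span2P => [k [l]]; rewrite lin_col5 => /col5_inj E; exists k, l. Qed.

Lemma in_span2_col5 (k l x0 x1 x2 x3 x4 u0 u1 u2 u3 u4 v0 v1 v2 v3 v4 : F) :
  x0 = k * u0 + l * v0 -> x1 = k * u1 + l * v1 -> x2 = k * u2 + l * v2 ->
  x3 = k * u3 + l * v3 -> x4 = k * u4 + l * v4 ->
  col5 x0 x1 x2 x3 x4 \in span2 (col5 u0 u1 u2 u3 u4) (col5 v0 v1 v2 v3 v4).
Proof. by move=> *; apply/span2P; exists k, l; rewrite lin_col5; congr col5. Qed.

Lemma indep2_col5 (u0 u1 u2 u3 u4 v0 v1 v2 v3 v4 : F) :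
  (forall k l, k * u0 + l * v0 = 0 -> k * u1 + l * v1 = 0 -> k * u2 + l * v2 = 0 ->
     k * u3 + l * v3 = 0 -> k * u4 + l * v4 = 0 -> k = 0 /\ l = 0) ->
  indep2 (col5 u0 u1 u2 u3 u4) (col5 v0 v1 v2 v3 v4).
Proof.
by move=> H; apply/indep2P => k l; rewrite lin_col5 -col5_0 => /col5_inj [*]; apply: H.
Qed.

Lemma col5_in_pi (x0 x1 x2 x3 x4 : F) :
  (col5 x0 x1 x2 x3 x4 \in pi_pl F) = (x3 == 0) && (x4 == 0).
Proof. by rewrite inE; case: (coord_col5 x0 x1 x2 x3 x4) => _ _ _ -> ->. Qed.

Lemma col5_in_ell (x0 x1 x2 x3 x4 : F) :
  (col5 x0 x1 x2 x3 x4 \in ell F) = [&& x2 == 0, x3 == 0 & x4 == 0].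
Proof. by rewrite inE; case: (coord_col5 x0 x1 x2 x3 x4) => _ _ -> -> ->. Qed.

Lemma ell_span2 : ell F = span2 (col5 1 0 0 0 0) (col5 0 1 0 0 0).
Proof.
apply/setP => z; rewrite [z]col5_coord col5_in_ell; apply/idP/idP.
  case/and3P => /eqP -> /eqP -> /eqP ->.
  by apply: (in_span2_col5 (k := coord z 0) (l := coord z 1)); ring.
by move/mem_span2_col5 => [k [l [_ _ -> -> ->]]]; rewrite !mulr0 addr0 eqxx.
Qed.

(* The points of [ell] are [ell_pt (Some k)] = (1,k,0,0,0) and [ell_pt None] =
   (0,1,0,0,0); [ell_cpl o] adds the remaining basis vector of [ell]. *)
Definition ell_pt (o : option F) : vec F :=
  col5 (if o is Some _ then 1 else 0) (if o is Some k then k else 1) 0 0 0.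
Definition ell_cpl (o : option F) (be x2 x3 x4 : F) : vec F :=
  col5 (if o is Some _ then 0 else be) (if o is Some _ then be else 0) x2 x3 x4.

(* [solid_of (Some l)] is X4 = l X5 and [solid_of None] is X5 = 0. *)
Definition dir4 (d : option F) : F := if d is Some l then l else 1.
Definition dir5 (d : option F) : F := if d is Some _ then 1 else 0.
Definition solid_of (d : option F) : {set vec F} :=
  [set x : vec F | dir5 d * coord x 3 == dir4 d * coord x 4].

Lemma col5_in_solid d (x0 x1 x2 x3 x4 : F) :
  (col5 x0 x1 x2 x3 x4 \in solid_of d) = (dir5 d * x3 == dir4 d * x4).
Proof. by rewrite inE; case: (coord_col5 x0 x1 x2 x3 x4) => _ _ _ -> ->. Qed.

Lemma dir_scale_inj d (k l : F) : k * dir4 d = l * dir4 d -> k * dir5 d = l * dir5 d -> k = l.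
Proof. by case: d => [m|] /=; rewrite ?mulr1 ?mulr0; [move=> _ | move=> ->]. Qed.

Lemma dir_scale_eq0 d (k : F) : k * dir4 d = 0 -> k * dir5 d = 0 -> k = 0.
Proof. by case: d => [m|] /=; rewrite ?mulr1 ?mulr0; [move=> _ | move=> ->]. Qed.

Lemma dir_cross_inj (d d' : option F) : dir5 d * dir4 d' = dir4 d * dir5 d' -> d = d'.
Proof.
case: d => [m|]; case: d' => [m'|] /=; simpr => // E; first by rewrite E.
  by move/eqP: E; rewrite oner_eq0.
by move/eqP: E; rewrite eq_sym oner_eq0.
Qed.

Definition lineA o (u : F) := span2 (ell_pt o) (ell_cpl o u 1 0 0).
Definition lineB d o (be y : F) := span2 (ell_pt o) (ell_cpl o be y (dir4 d) (dir5 d)).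
Definition lineC d (y1 y2 z1 z2 : F) :=
  span2 (col5 y1 y2 1 0 0) (col5 z1 z2 0 (dir4 d) (dir5 d)).
Definition lineD (u1 u2 u3 v1 v2 v3 : F) := span2 (col5 u1 u2 u3 1 0) (col5 v1 v2 v3 0 1).

Variant line_nf_spec (L : {set vec F}) : Prop :=
  | LineA o u of L = lineA o u
  | LineB d o be y of L = lineB d o be y
  | LineC d y1 y2 z1 z2 of L = lineC d y1 y2 z1 z2
  | LineD u1 u2 u3 v1 v2 v3 of L = lineD u1 u2 u3 v1 v2 v3.

Lemma ell_pt_exists (m0 m1 : F) :
  col5 m0 m1 0 0 0 != 0 -> exists o k, k != 0 /\ col5 m0 m1 0 0 0 = k *: ell_pt o.
Proof.
have [->|m0n] := eqVneq m0 0 => m_neq0.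
  exists None, m1; rewrite scale_col5; simpr; split => //.
  by apply: contraNneq m_neq0 => ->; rewrite col5_0.
exists (Some (m1 / m0)), m0; split => //; rewrite scale_col5; congr col5; field_nz.
Qed.

Definition ell_coord o (x0 x1 : F) : F := if o is Some m then x1 - m * x0 else x0.

Lemma ell_cpl_decomp o (x0 x1 x2 x3 x4 : F) :
  exists k, col5 x0 x1 x2 x3 x4 = ell_cpl o (ell_coord o x0 x1) x2 x3 x4 + k *: ell_pt o.
Proof.
by exists (if o is Some _ then x0 else x1); rewrite scale_col5 add_col5;
  case: o => [m|] /=; congr col5; ring.
Qed.

Lemma span2_ell_pt_col5 o (x0 x1 x2 x3 x4 : F) :
  span2 (ell_pt o) (col5 x0 x1 x2 x3 x4) =
  span2 (ell_pt o) (ell_cpl o (ell_coord o x0 x1) x2 x3 x4).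
Proof. by have [k ->] := ell_cpl_decomp o x0 x1 x2 x3 x4; rewrite span2_shear. Qed.

Lemma span2_ell_nf (m0 m1 x0 x1 x2 x3 x4 : F) : col5 m0 m1 0 0 0 != 0 ->
  exists o be, span2 (col5 m0 m1 0 0 0) (col5 x0 x1 x2 x3 x4) =
               span2 (ell_pt o) (ell_cpl o be x2 x3 x4).
Proof.
move=> /ell_pt_exists [o [k [kn ->]]].
by exists o, (ell_coord o x0 x1); rewrite span2C span2_scale // span2C span2_ell_pt_col5.
Qed.

Lemma dir_exists (u3 u4 v3 v4 : F) : (u3 != 0) || (u4 != 0) -> u3 * v4 = u4 * v3 ->
  exists d k l, [/\ k != 0, u3 = k * dir4 d, u4 = k * dir5 d, v3 = l * u3 & v4 = l * u4].
Proof.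
have [->|u4n] := eqVneq u4 0 => /=.
  rewrite orbF mul0r => u3n /eqP; rewrite mulf_eq0 (negPf u3n) /= => /eqP ->.
  by exists None, u3, (v3 / u3); split => //=; field; rewrite // mulr0.
move=> _ E; exists (Some (u3 / u4)), u4, (v4 / u4); split => //=; try by field.
by apply: (mulfI u4n); rewrite -E; field_nz.
Qed.

Lemma classify_through_pi_point d (k x0 x1 x2 m0 m1 m2 : F) :
  k != 0 -> col5 m0 m1 m2 0 0 != 0 ->
  let L := span2 (col5 x0 x1 x2 (k * dir4 d) (k * dir5 d)) (col5 m0 m1 m2 0 0) in
  (exists o be y, L = lineB d o be y) \/ (exists y1 y2 z1 z2, L = lineC d y1 y2 z1 z2).
Proof.
move=> kn m_neq0 L; rewrite {}/L span2C -(span2_scale _ _ (invr_neq0 kn)).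
have -> : k^-1 *: col5 x0 x1 x2 (k * dir4 d) (k * dir5 d) =
          col5 (x0 / k) (x1 / k) (x2 / k) (dir4 d) (dir5 d).
  by rewrite scale_col5; congr col5; field_nz.
have [m20|m2n] := eqVneq m2 0.
  subst m2; left.
  have [o [be ->]] := span2_ell_nf (x0 / k) (x1 / k) (x2 / k) (dir4 d) (dir5 d) m_neq0.
  by exists o, be, (x2 / k).
right; rewrite span2C -(span2_scale _ _ (invr_neq0 m2n)) span2C.
rewrite -(span2_shear _ _ (- (x2 / k))) !scale_col5 add_col5.
exists (m2^-1 * m0), (m2^-1 * m1), (x0 / k + - (x2 / k) * (m2^-1 * m0)),
  (x1 / k + - (x2 / k) * (m2^-1 * m1)).
by rewrite /lineC; congr (span2 (col5 _ _ _ _ _) (col5 _ _ _ _ _)); field_nz.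
Qed.

Lemma classify_meets_pi (u0 u1 u2 u3 u4 v0 v1 v2 v3 v4 : F) :
  let L := span2 (col5 u0 u1 u2 u3 u4) (col5 v0 v1 v2 v3 v4) in
  indep2 (col5 u0 u1 u2 u3 u4) (col5 v0 v1 v2 v3 v4) ->
  (u3 != 0) || (u4 != 0) -> u3 * v4 = u4 * v3 ->
  (exists d o be y, L = lineB d o be y) \/ (exists d y1 y2 z1 z2, L = lineC d y1 y2 z1 z2).
Proof.
move=> L I u34 D0; have [d [k [l [kn e3 e4 e3' e4']]]] := dir_exists u34 D0.
have Em : col5 v0 v1 v2 v3 v4 + (- l) *: col5 u0 u1 u2 u3 u4 =
          col5 (v0 - l * u0) (v1 - l * u1) (v2 - l * u2) 0 0.
  by rewrite scale_col5 add_col5 e3' e4'; congr col5; ring.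
have m_neq0 : col5 (v0 - l * u0) (v1 - l * u1) (v2 - l * u2) 0 0 != 0.
  by rewrite -Em addrC -[col5 v0 _ _ _ _]scale1r indep2_comb_neq0 ?oner_neq0 ?orbT.
rewrite {}/L -(span2_shear _ _ (- l)) Em e3 e4.
case: (classify_through_pi_point d u0 u1 u2 kn m_neq0).
  by case=> o [be [y ->]]; left; exists d, o, be, y.
by case=> y1 [y2 [z1 [z2 ->]]]; right; exists d, y1, y2, z1, z2.
Qed.

Lemma classify_in_pi (u0 u1 u2 v0 v1 v2 : F) :
  indep2 (col5 u0 u1 u2 0 0) (col5 v0 v1 v2 0 0) -> u2 != 0 ->
  exists o be, span2 (col5 u0 u1 u2 0 0) (col5 v0 v1 v2 0 0) = lineA o be.
Proof.
move=> I u2n; have Em : col5 v0 v1 v2 0 0 + (- (v2 / u2)) *: col5 u0 u1 u2 0 0 =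
    col5 (v0 - v2 / u2 * u0) (v1 - v2 / u2 * u1) 0 0 0.
  by rewrite scale_col5 add_col5; congr col5; field_nz.
have m_neq0 : col5 (v0 - v2 / u2 * u0) (v1 - v2 / u2 * u1) 0 0 0 != 0.
  by rewrite -Em addrC -[col5 v0 _ _ _ _]scale1r indep2_comb_neq0 ?oner_neq0 ?orbT.
rewrite -(span2_shear _ _ (- (v2 / u2))) Em span2C -(span2_scale _ _ (invr_neq0 u2n)).
rewrite scale_col5 mulVf // !mulr0.
by have [o [be ->]] := span2_ell_nf (u2^-1 * u0) (u2^-1 * u1) 1 0 0 m_neq0; exists o, be.
Qed.

Lemma classify_off_pi (u0 u1 u2 u3 u4 v0 v1 v2 v3 v4 : F) :
  indep2 (col5 u0 u1 u2 u3 u4) (col5 v0 v1 v2 v3 v4) -> u3 * v4 - u4 * v3 != 0 ->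
  exists x1 x2 x3 y1 y2 y3,
    span2 (col5 u0 u1 u2 u3 u4) (col5 v0 v1 v2 v3 v4) = lineD x1 x2 x3 y1 y2 y3.
Proof.
set D := u3 * v4 - u4 * v3 => I Dn.
exists ((v4 * u0 - u4 * v0) / D), ((v4 * u1 - u4 * v1) / D), ((v4 * u2 - u4 * v2) / D),
  ((u3 * v0 - v3 * u0) / D), ((u3 * v1 - v3 * u1) / D), ((u3 * v2 - v3 * u2) / D).
symmetry; apply: span2_eq => //.
- by apply: indep2_col5 => k l _ _ _; simpr.
- by apply: (in_span2_col5 (k := v4 / D) (l := - u4 / D)); rewrite /D; field_nz.
- by apply: (in_span2_col5 (k := - v3 / D) (l := u3 / D)); rewrite /D; field_nz.
Qed.

Lemma line_nfP L : L \in lines F -> L != ell F -> line_nf_spec L.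
Proof.
move=> /linesP [u [v [+ ->]]]; rewrite [u]col5_coord [v]col5_coord.
move: (coord u 0) (coord u 1) (coord u 2) (coord u 3) (coord u 4) => u0 u1 u2 u3 u4.
move: (coord v 0) (coord v 1) (coord v 2) (coord v 3) (coord v 4) => v0 v1 v2 v3 v4.
move=> I nE.
have [D0|Dn] := eqVneq (u3 * v4 - u4 * v3) 0; last first.
  by have [x1 [x2 [x3 [y1 [y2 [y3 ->]]]]]] := classify_off_pi I Dn; apply: LineD.
move/eqP: D0; rewrite subr_eq0 => /eqP D0.
have nf_meets (X Y : vec F) : (exists d o be y, span2 X Y = lineB d o be y) \/
    (exists d y1 y2 z1 z2, span2 X Y = lineC d y1 y2 z1 z2) -> line_nf_spec (span2 X Y).
  by case=> [[d [o [be [y ->]]]]|[d [y1 [y2 [z1 [z2 ->]]]]]]; [apply: LineB | apply: LineC].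
have [u34|] := boolP ((u3 != 0) || (u4 != 0)); first exact/nf_meets/classify_meets_pi.
case/norP => /negPn/eqP u30 /negPn/eqP u40.
have [v34|] := boolP ((v3 != 0) || (v4 != 0)).
  rewrite span2C; apply/nf_meets/classify_meets_pi => //; first exact: indep2C.
  by rewrite u30 u40 !mulr0.
case/norP => /negPn/eqP v30 /negPn/eqP v40; subst u3 u4 v3 v4.
have [u20|u2n] := eqVneq u2 0; last first.
  by have [o [be ->]] := classify_in_pi I u2n; apply: LineA.
have [v20|v2n] := eqVneq v2 0; last first.
  by rewrite span2C; have [o [be ->]] := classify_in_pi (indep2C I) v2n; apply: LineA.
case/negP: nE; subst u2 v2; apply/eqP; rewrite ell_span2; apply: span2_eq => //.
- by apply: indep2_col5 => k l; simpr => -> ->.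
- by apply: (in_span2_col5 (k := u0) (l := u1)); ring.
- by apply: (in_span2_col5 (k := v0) (l := v1)); ring.
Qed.

End NormalForms.

Section LineTypes.
Variable F : finFieldType.
Implicit Types (o d : option F).

Definition typeB_of d (P : {set vec F}) : {set {set vec F}} :=
  [set L in lines F | [&& L \subset solid_of d, P \subset L & ~~ (L \subset pi_pl F)]].
Definition typeC_of d : {set {set vec F}} :=
  [set L in lines F | [&& L \subset solid_of d, L :&: ell F == zero_sp F
                        & L :&: pi_pl F \in points F]].

Lemma ell_pt_ell o : ell_pt o \in ell F.
Proof. by case: o => [m|]; rewrite col5_in_ell !eqxx. Qed.

Lemma ell_pt_pi o : ell_pt o \in pi_pl F.
Proof. by case: o => [m|]; rewrite col5_in_pi !eqxx. Qed.

Lemma ell_pt_neq0 o : ell_pt o != 0.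
Proof.
rewrite /ell_pt -col5_0; apply/eqP => /col5_inj [].
by case: o => [m|] /=; [move=> /eqP | move=> _ /eqP]; rewrite oner_eq0.
Qed.

Lemma ell_pt_notin_meet0 o (L S : {set vec F}) :
  L :&: S = zero_sp F -> ell_pt o \in L -> ell_pt o \notin S.
Proof. by move=> LS oL; apply/negP => /(meet_zero_sp LS oL) /eqP; apply/negP/ell_pt_neq0. Qed.

Lemma lineA_in_lines o (u : F) : lineA o u \in lines F.
Proof.
apply: span2_line; rewrite /ell_pt /ell_cpl.
by case: o => [m|]; apply: indep2_col5 => k l; simpr; [move=> -> _ -> | move=> _ -> ->].
Qed.

Lemma lineB_in_lines d o (be y : F) : lineB d o be y \in lines F.
Proof.
apply: span2_line; rewrite /ell_pt /ell_cpl.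
by case: o => [m|]; apply: indep2_col5 => k l; simpr => E0 E1 _ /dir_scale_eq0 E3 /E3 l0;
  move: E0 E1; rewrite l0; simpr; [move=> -> | move=> _ ->].
Qed.

Lemma lineC_in_lines d (y1 y2 z1 z2 : F) : lineC d y1 y2 z1 z2 \in lines F.
Proof.
apply: span2_line; apply: indep2_col5 => k l _ _; simpr => k0.
by rewrite k0 => /dir_scale_eq0 H /H.
Qed.

Lemma lineD_in_lines (u1 u2 u3 v1 v2 v3 : F) : lineD u1 u2 u3 v1 v2 v3 \in lines F.
Proof. by apply: span2_line; apply: indep2_col5 => k l _ _ _; simpr. Qed.

Lemma lineA_sub_pi o (u : F) : lineA o u \subset pi_pl F.
Proof.
by apply: span2_subset => k l; case: o => [m|]; rewrite lin_col5 col5_in_pi; simpr.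
Qed.

Lemma lineA_neq_ell o (u : F) : lineA o u != ell F.
Proof.
by apply: (neq_set_mem (mem_span2r _ _)); case: o => [m|]; rewrite col5_in_ell; simpr.
Qed.

Lemma lineA_typeA o (u : F) : lineA o u \in typeA (span1 (ell_pt o)).
Proof. by rewrite inE lineA_in_lines lineA_sub_pi span1_sub2 lineA_neq_ell. Qed.

Lemma lineB_solid d o (be y : F) : lineB d o be y \subset solid_of d.
Proof.
by apply: span2_subset => k l; case: o => [m|]; rewrite lin_col5 col5_in_solid; apply/eqP; ring.
Qed.

Lemma dir_notin_pi d (x0 x1 x2 : F) : col5 x0 x1 x2 (dir4 d) (dir5 d) \notin pi_pl F.
Proof. by rewrite col5_in_pi; case: d => [m|] /=; simpr. Qed.

Lemma ell_cpl_notin_pi d o (be y : F) : ell_cpl o be y (dir4 d) (dir5 d) \notin pi_pl F.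
Proof. exact: dir_notin_pi. Qed.

Lemma lineB_typeB d o (be y : F) : lineB d o be y \in typeB_of d (span1 (ell_pt o)).
Proof.
rewrite inE lineB_in_lines lineB_solid span1_sub2 /=.
by apply: contra (ell_cpl_notin_pi d o be y) => /subsetP; apply; apply: mem_span2r.
Qed.

Lemma lineB_neq_ell d o (be y : F) : lineB d o be y != ell F.
Proof.
apply: (neq_set_mem (mem_span2r _ _)).
by rewrite col5_in_ell; case: d => [m|] /=; rewrite ?oner_eq0 ?andbF.
Qed.

Lemma lineC_solid d (y1 y2 z1 z2 : F) : lineC d y1 y2 z1 z2 \subset solid_of d.
Proof. by apply: span2_subset => k l; rewrite lin_col5 col5_in_solid; apply/eqP; ring. Qed.

Lemma lineC_meet_ell d (y1 y2 z1 z2 : F) : lineC d y1 y2 z1 z2 :&: ell F = zero_sp F.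
Proof.
apply/setP => z; rewrite in_setI in_set1; apply/andP/eqP => [[/span2P [k [l ->]]]|->].
  rewrite lin_col5 col5_in_ell; simpr => /and3P [/eqP k0 /eqP l4 /eqP l5].
  by rewrite k0 (dir_scale_eq0 l4 l5); simpr; rewrite col5_0.
by rewrite mem_span2_0 -col5_0 col5_in_ell eqxx.
Qed.

Lemma lineC_meet_pi d (y1 y2 z1 z2 : F) :
  lineC d y1 y2 z1 z2 :&: pi_pl F = span1 (col5 y1 y2 1 0 0).
Proof.
apply/setP => z; rewrite in_setI; apply/andP/span1P => [[/span2P [k [l ->]]]|[k ->]].
  rewrite lin_col5 col5_in_pi; simpr => /andP [/eqP l4 /eqP l5].
  by exists k; rewrite (dir_scale_eq0 l4 l5) scale_col5; congr col5; ring.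
split; first by apply/span2P; exists k, 0; rewrite scale0r addr0.
by rewrite scale_col5 col5_in_pi; simpr.
Qed.

Lemma lineC_typeC d (y1 y2 z1 z2 : F) : lineC d y1 y2 z1 z2 \in typeC_of d.
Proof.
rewrite inE lineC_in_lines lineC_solid lineC_meet_ell lineC_meet_pi eqxx /= inE.
apply/existsP; exists (col5 y1 y2 1 0 0); rewrite eqxx andbT -col5_0.
by apply/eqP => /col5_inj [_ _ /eqP]; rewrite oner_eq0.
Qed.

Lemma lineC_neq_ell d (y1 y2 z1 z2 : F) : lineC d y1 y2 z1 z2 != ell F.
Proof. by apply: (neq_set_mem (mem_span2l _ _)); rewrite col5_in_ell oner_eq0. Qed.

Lemma lineD_meet_pi (u1 u2 u3 v1 v2 v3 : F) :
  lineD u1 u2 u3 v1 v2 v3 :&: pi_pl F = zero_sp F.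
Proof.
apply/setP => z; rewrite in_setI in_set1; apply/andP/eqP => [[/span2P [k [l ->]]]|->].
  by rewrite lin_col5 col5_in_pi; simpr => /andP [/eqP -> /eqP ->]; simpr; rewrite col5_0.
by rewrite mem_span2_0 -col5_0 col5_in_pi eqxx.
Qed.

Lemma lineD_typeD (u1 u2 u3 v1 v2 v3 : F) : lineD u1 u2 u3 v1 v2 v3 \in typeD F.
Proof. by rewrite inE lineD_in_lines lineD_meet_pi eqxx. Qed.

Lemma lineD_neq_ell (u1 u2 u3 v1 v2 v3 : F) : lineD u1 u2 u3 v1 v2 v3 != ell F.
Proof. by apply: (neq_set_mem (mem_span2l _ _)); rewrite col5_in_ell oner_eq0 andbF. Qed.

Lemma ell_pt_scale_inj o o' (k : F) : ell_pt o = k *: ell_pt o' -> o = o'.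
Proof.
rewrite /ell_pt scale_col5 => /col5_inj [].
case: o => [m|]; case: o' => [m'|] //=; simpr.
- by move=> <-; simpr => ->.
- by move=> /eqP; rewrite oner_eq0.
- by move=> <-; simpr => /eqP; rewrite oner_eq0.
Qed.

Lemma ell_pt_in_span_inj o o' (be y x3 x4 : F) :
  (forall l : F, l * y = 0 -> l * x3 = 0 -> l * x4 = 0 -> l = 0) ->
  ell_pt o \in span2 (ell_pt o') (ell_cpl o' be y x3 x4) -> o = o'.
Proof.
move=> H /mem_span2_col5 [k [l [e0 e1 e2 e3 e4]]].
have l0 : l = 0 by apply: H; [move: e2|move: e3|move: e4]; simpr => /esym.
apply: (ell_pt_scale_inj (k := k)); rewrite /ell_pt scale_col5.
by congr col5; rewrite ?e0 ?e1 ?l0; simpr.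
Qed.

Lemma ell_pt_lineA o o' (u : F) : ell_pt o \in lineA o' u -> o = o'.
Proof. by apply: ell_pt_in_span_inj => l; rewrite mulr1. Qed.

Lemma ell_pt_lineB d o o' (be y : F) : ell_pt o \in lineB d o' be y -> o = o'.
Proof. by apply: ell_pt_in_span_inj => l _; apply: dir_scale_eq0. Qed.

End LineTypes.

Section LineTypeCharacterisation.
Variable F : finFieldType.
Implicit Types (o d : option F).

Lemma lineA_inj o (u u' : F) : lineA o u = lineA o u' -> u = u'.
Proof.
move=> E; have : ell_cpl o u' 1 0 0 \in lineA o u by rewrite E; apply: mem_span2r.
move=> {E} /mem_span2_col5 [k [l [e0 e1 e2 _ _]]].
by case: o e0 e1 => [m|] /=; move: e2; simpr => e2 e0 e1; subst; ring.
Qed.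

Lemma lineB_inj d o (be y be' y' : F) :
  lineB d o be y = lineB d o be' y' -> be = be' /\ y = y'.
Proof.
move=> E; have : ell_cpl o be' y' (dir4 d) (dir5 d) \in lineB d o be y.
  by rewrite E; apply: mem_span2r.
move=> {E} /mem_span2_col5 [k [l [e0 e1 e2 e3 e4]]].
have l1 : l = 1 by apply: (@dir_scale_inj _ d); [move: e3|move: e4]; simpr => <-; simpr.
subst l; move: e2; simpr => e2; subst y'; split => //.
by case: o e0 e1 => [m|] /=; simpr => e0 e1; subst; ring.
Qed.

Lemma lineC_inj d (y1 y2 z1 z2 y1' y2' z1' z2' : F) :
  lineC d y1 y2 z1 z2 = lineC d y1' y2' z1' z2' ->
  [/\ y1 = y1', y2 = y2', z1 = z1' & z2 = z2'].
Proof.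
move=> E.
have : col5 y1' y2' 1 0 0 \in lineC d y1 y2 z1 z2 by rewrite E; apply: mem_span2l.
have : col5 z1' z2' 0 (dir4 d) (dir5 d) \in lineC d y1 y2 z1 z2.
  by rewrite E; apply: mem_span2r.
move=> /mem_span2_col5 [k [l [e0 e1 e2 e3 e4]]] /mem_span2_col5 [k' [l' [e0' e1' e2' e3' e4']]].
have l1 : l = 1 by apply: (@dir_scale_inj _ d); [move: e3|move: e4]; simpr => <-; simpr.
have l0 : l' = 0 by apply: (@dir_scale_eq0 _ d); [move: e3'|move: e4']; simpr => <-.
by subst l l'; move: e2 e2' e0 e1 e0' e1'; simpr => e2 e2' e0 e1 e0' e1'; subst; split; ring.
Qed.

Lemma lineD_inj (u1 u2 u3 v1 v2 v3 u1' u2' u3' v1' v2' v3' : F) :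
  lineD u1 u2 u3 v1 v2 v3 = lineD u1' u2' u3' v1' v2' v3' ->
  [/\ u1 = u1', u2 = u2' & u3 = u3'] /\ [/\ v1 = v1', v2 = v2' & v3 = v3'].
Proof.
move=> E.
have : col5 u1' u2' u3' 1 0 \in lineD u1 u2 u3 v1 v2 v3 by rewrite E; apply: mem_span2l.
have : col5 v1' v2' v3' 0 1 \in lineD u1 u2 u3 v1 v2 v3 by rewrite E; apply: mem_span2r.
move=> /mem_span2_col5 [k [l [e0 e1 e2 e3 e4]]] /mem_span2_col5 [k' [l' [e0' e1' e2' e3' e4']]].
by move: e3 e4 e3' e4'; simpr => e3 e4 e3' e4'; subst; split; split; ring.
Qed.

Lemma typeA_nf o : typeA (span1 (ell_pt o)) = [set lineA o u | u : F].
Proof.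
apply/setP => L; apply/idP/imsetP => [|[u _ ->]]; last exact: lineA_typeA.
rewrite inE => /andP [Ll /and3P [Lpi /subsetP PL Ln]].
have pL := PL _ (mem_span1 (ell_pt o)).
case: (line_nfP Ll Ln) => [o' u|d o' be y|d y1 y2 z1 z2|u1 u2 u3 v1 v2 v3] EL; subst L.
- by exists u => //; rewrite (ell_pt_lineA pL).
- by move: (subsetP Lpi _ (mem_span2r _ _)); rewrite (negPf (ell_cpl_notin_pi _ _ _ _)).
- by move: (subsetP Lpi _ (mem_span2r _ _)); rewrite (negPf (dir_notin_pi _ _ _ _)).
- by move: (subsetP Lpi _ (mem_span2l _ _)); rewrite col5_in_pi; simpr.
Qed.

Lemma typeB_nf d o : typeB_of d (span1 (ell_pt o)) = [set lineB d o p.1 p.2 | p : F * F].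
Proof.
apply/setP => L; apply/idP/imsetP => [|[[be y] _ ->]]; last exact: lineB_typeB.
rewrite inE => /andP [Ll /and3P [Ls /subsetP PL Lpi]].
have pL := PL _ (mem_span1 (ell_pt o)).
have Ln : L != ell F.
  by apply: contraNneq Lpi => ->; apply/subsetP => x; rewrite !inE => /and3P [_ -> ->].
case: (line_nfP Ll Ln) => [o' u|d' o' be y|d' y1 y2 z1 z2|u1 u2 u3 v1 v2 v3] EL; subst L.
- by rewrite lineA_sub_pi in Lpi.
- have := subsetP Ls _ (mem_span2r _ _); rewrite col5_in_solid => /eqP /dir_cross_inj dd.
  by subst d'; exists (be, y) => //; rewrite (ell_pt_lineB pL).
- by case/negP: (ell_pt_notin_meet0 (lineC_meet_ell _ _ _ _ _) pL); apply: ell_pt_ell.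
- by case/negP: (ell_pt_notin_meet0 (lineD_meet_pi _ _ _ _ _ _) pL); apply: ell_pt_pi.
Qed.

Lemma typeC_nf d L : L \in typeC_of d -> exists y1 y2 z1 z2, L = lineC d y1 y2 z1 z2.
Proof.
rewrite inE => /andP [Ll /and3P [Ls /eqP Lell Lpt]].
have Ln : L != ell F.
  apply: contraTneq Lpt => EL; subst L.
  have -> : ell F :&: pi_pl F = ell F.
    by apply/setIidPl/subsetP => x; rewrite !inE => /and3P [_ -> ->].
  by apply/negP => /pointP [x + xe]; rewrite (meet_zero_sp Lell xe xe) eqxx.
case: (line_nfP Ll Ln) => [o u|d' o be y|d' y1 y2 z1 z2|u1 u2 u3 v1 v2 v3] EL; subst L.
- by case/negP: (ell_pt_notin_meet0 Lell (mem_span2l _ _)); apply: ell_pt_ell.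
- by case/negP: (ell_pt_notin_meet0 Lell (mem_span2l _ _)); apply: ell_pt_ell.
- have := subsetP Ls _ (mem_span2r _ _); rewrite col5_in_solid => /eqP /dir_cross_inj dd.
  by subst d'; exists y1, y2, z1, z2.
- by move: Lpt; rewrite lineD_meet_pi (negPf (zero_sp_notin_points F)).
Qed.

Lemma typeD_nf L : L \in typeD F -> exists u1 u2 u3 v1 v2 v3, L = lineD u1 u2 u3 v1 v2 v3.
Proof.
rewrite inE => /andP [Ll /eqP Lpi].
have Ln : L != ell F.
  apply/eqP => EL; subst L.
  by case/negP: (ell_pt_notin_meet0 Lpi (ell_pt_ell None)); apply: ell_pt_pi.
case: (line_nfP Ll Ln) => [o u|d o be y|d y1 y2 z1 z2|u1 u2 u3 v1 v2 v3] EL; subst L.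
- by case/negP: (ell_pt_notin_meet0 Lpi (mem_span2l _ _)); apply: ell_pt_pi.
- by case/negP: (ell_pt_notin_meet0 Lpi (mem_span2l _ _)); apply: ell_pt_pi.
- have : col5 y1 y2 1 0 0 \in pi_pl F by rewrite col5_in_pi eqxx.
  move/(meet_zero_sp Lpi (mem_span2l _ _)); rewrite -col5_0 => /col5_inj [_ _ /eqP].
  by rewrite oner_eq0.
- by exists u1, u2, u3, v1, v2, v3.
Qed.

Lemma typeA_ell_pt_inj : injective (fun o => typeA (span1 (ell_pt o))).
Proof.
move=> o o' /= E; have : lineA o 0 \in typeA (span1 (ell_pt o')) by rewrite -E lineA_typeA.
rewrite inE => /andP [_ /and3P [_ /subsetP PL _]].
exact/esym/ell_pt_lineA/PL/mem_span1.
Qed.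

Lemma typeB_of_inj d d' o o' :
  typeB_of d (span1 (ell_pt o)) = typeB_of d' (span1 (ell_pt o')) -> d = d' /\ o = o'.
Proof.
move=> E; have : lineB d o 0 0 \in typeB_of d' (span1 (ell_pt o')) by rewrite -E lineB_typeB.
rewrite inE => /andP [_ /and3P [/subsetP Ls /subsetP PL _]].
split; last exact/esym/ell_pt_lineB/PL/mem_span1.
by have := Ls _ (mem_span2r _ _); rewrite col5_in_solid => /eqP /dir_cross_inj.
Qed.

End LineTypeCharacterisation.

Section Group.
Variables (F : finFieldType) (a b c : F).
Implicit Types (o d : option F) (L : {set vec F}).
Local Notation M := (Mrst a b c).
Local Notation orbit := (Defs.orbit a b c).
Local Notation O := (line_orbits a b c).

Definition incr0 (r s t x2 x3 x4 : F) := r * x2 + (r ^+ 2 - a * r + s) * x3 + t * x4.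
Definition incr1 (r s t x2 x3 x4 : F) :=
  s * x2 + (2 * r * s - t) * x3 + (s ^+ 2 + b * s - c * r) * x4.
Definition incr2 (r s x3 x4 : F) := 2 * r * x3 + 2 * s * x4.

Lemma Mrst_col5 r s t (x0 x1 x2 x3 x4 : F) :
  M r s t *m col5 x0 x1 x2 x3 x4 =
  col5 (x0 + incr0 r s t x2 x3 x4) (x1 + incr1 r s t x2 x3 x4) (x2 + incr2 r s x3 x4) x3 x4.
Proof.
apply/matrixP => i j; rewrite !mxE !big_ord_recl big_ord0 !mxE /incr0 /incr1 /incr2 /=.
by case: i => [[|[|[|[|[|i]]]]] Hi] //=; ring.
Qed.

Lemma Mrst_mul (r s t r' s' t' : F) :
  M r s t *m M r' s' t' = M (r + r') (s + s') (t + t' + 2 * r * s').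
Proof.
apply/matrixP => i j; rewrite !mxE !big_ord_recl big_ord0 !mxE /=.
by case: i => [[|[|[|[|[|i]]]]] Hi] //=; case: j => [[|[|[|[|[|j]]]]] Hj] //=; ring.
Qed.

Lemma Mrst0 : M 0 0 0 = 1%:M.
Proof.
apply/matrixP => i j; rewrite !mxE.
by case: i => [[|[|[|[|[|i]]]]] Hi] //=; case: j => [[|[|[|[|[|j]]]]] Hj] //=; ring.
Qed.

Lemma Mrst_inj (r s t r' s' t' : F) : M r s t = M r' s' t' -> [/\ r = r', s = s' & t = t'].
Proof.
move=> E; have := congr1 (mulmx^~ (col5 0 0 1 0 0)) E.
have := congr1 (mulmx^~ (col5 0 0 0 0 1)) E.
rewrite /= !Mrst_col5 /incr0 /incr1 => /col5_inj [+ _ _ _ _] /col5_inj [+ + _ _ _].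
by rewrite !(mulr0, mulr1, addr0, add0r).
Qed.

Lemma GsetP (g : 'M[F]_5) : reflect (exists r s t, g = M r s t) (g \in Gset a b c).
Proof.
rewrite inE; apply: (iffP existsP) => [[r /existsP [s /existsP [t /eqP ->]]]|[r [s [t ->]]]].
  by exists r, s, t.
by exists r; apply/existsP; exists s; apply/existsP; exists t.
Qed.

Lemma card_Gset : #|Gset a b c| = (#|F| ^ 3)%N.
Proof.
have -> : Gset a b c = [set M p.1.1 p.1.2 p.2 | p : F * F * F].
  apply/setP => g; apply/GsetP/imsetP => [[r [s [t ->]]]|[[[r s] t] _ ->]].
    by exists (r, s, t).
  by exists r, s, t.
rewrite card_imset ?card_prod ?expnS ?expn0 ?muln1 ?mulnA //.
by move=> [[r s] t] [[r' s'] t'] /= /Mrst_inj [-> -> ->].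
Qed.

Lemma orbitP L L' : reflect (exists r s t, L' = act (M r s t) L) (L' \in orbit L).
Proof.
apply: (iffP imsetP) => [[g /GsetP [r [s [t ->]]] ->]|[r [s [t ->]]]].
  by exists r, s, t.
by exists (M r s t) => //; apply/GsetP; exists r, s, t.
Qed.

Lemma orbit_refl L : L \in orbit L.
Proof. by apply/orbitP; exists 0, 0, 0; rewrite Mrst0 act1. Qed.

Lemma orbit_act r s t L : orbit (act (M r s t) L) = orbit L.
Proof.
apply/setP => X; apply/orbitP/orbitP => [[r' [s' [t' ->]]]|[r' [s' [t' ->]]]].
  by exists (r' + r), (s' + s), (t' + t + 2 * r' * s); rewrite act_mul Mrst_mul.
exists (r' - r), (s' - s), (t' - t - 2 * (r' - r) * s); rewrite act_mul Mrst_mul.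
by congr act; congr Mrst; ring.
Qed.

Lemma orbit_transl L L' : L' \in orbit L -> orbit L' = orbit L.
Proof. by move/orbitP => [r [s [t ->]]]; rewrite orbit_act. Qed.

Lemma Mrst_ell_pt r s t o : M r s t *m ell_pt o = ell_pt o.
Proof. by rewrite Mrst_col5 /incr0 /incr1 /incr2; case: o => [m|] /=; congr col5; ring. Qed.

Lemma span2_shear_eq (X Y X' Y' : vec F) k :
  X = X' -> Y = Y' + k *: X' -> span2 X Y = span2 X' Y'.
Proof. by move=> -> ->; rewrite span2_shear. Qed.

Lemma act_lineA r s t o (u : F) : act (M r s t) (lineA o u) = lineA o (u + ell_coord o r s).
Proof.
rewrite /lineA act_span2 Mrst_ell_pt Mrst_col5 span2_ell_pt_col5.
by rewrite /incr0 /incr1 /incr2; case: o => [m|] /=; congr (span2 _ (col5 _ _ _ _ _)); ring.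
Qed.

Lemma act_lineB r s t d o (be y : F) :
  act (M r s t) (lineB d o be y) =
  lineB d o
    (be + ell_coord o (incr0 r s t y (dir4 d) (dir5 d)) (incr1 r s t y (dir4 d) (dir5 d)))
    (y + incr2 r s (dir4 d) (dir5 d)).
Proof.
rewrite /lineB act_span2 Mrst_ell_pt Mrst_col5 span2_ell_pt_col5.
by case: o => [m|] /=; congr (span2 _ (col5 _ _ _ _ _)); ring.
Qed.

Lemma act_lineC r s t d (y1 y2 z1 z2 : F) :
  act (M r s t) (lineC d y1 y2 z1 z2) =
  lineC d (y1 + r) (y2 + s)
    (z1 + incr0 r s t 0 (dir4 d) (dir5 d) - incr2 r s (dir4 d) (dir5 d) * (y1 + r))
    (z2 + incr1 r s t 0 (dir4 d) (dir5 d) - incr2 r s (dir4 d) (dir5 d) * (y2 + s)).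
Proof.
rewrite /lineC act_span2 !Mrst_col5.
apply: (span2_shear_eq (k := incr2 r s (dir4 d) (dir5 d)));
  rewrite ?scale_col5 ?add_col5 /incr0 /incr1 /incr2; congr col5; ring.
Qed.

Lemma act_lineD r s t (u1 u2 u3 v1 v2 v3 : F) :
  act (M r s t) (lineD u1 u2 u3 v1 v2 v3) =
  lineD (u1 + incr0 r s t u3 1 0) (u2 + incr1 r s t u3 1 0) (u3 + 2 * r)
        (v1 + incr0 r s t v3 0 1) (v2 + incr1 r s t v3 0 1) (v3 + 2 * s).
Proof.
rewrite /lineD act_span2 !Mrst_col5 /incr2.
by congr (span2 (col5 _ _ _ _ _) (col5 _ _ _ _ _)); ring.
Qed.

Lemma card_orbit_free L :
  (forall r s t, act (M r s t) L = L -> [/\ r = 0, s = 0 & t = 0]) ->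
  #|orbit L| = (#|F| ^ 3)%N.
Proof.
move=> stab; rewrite /Defs.orbit card_in_imset ?card_Gset //.
move=> g g' /GsetP [r [s [t ->]]] /GsetP [r' [s' [t' ->]]] /= E.
have : act (M (r - r') (s - s') (t - t' + 2 * r' * (s' - s))) L = L.
  rewrite (_ : M _ _ _ = M (- r') (- s') (2 * r' * s' - t') *m M r s t); last first.
    by rewrite Mrst_mul; congr (M _ _ _); ring.
  rewrite -act_mul E act_mul Mrst_mul -[RHS]act1 -Mrst0; congr (act (M _ _ _) _); ring.
case/stab => /eqP; rewrite subr_eq0 => /eqP <- /eqP; rewrite subr_eq0 => /eqP <-.
by rewrite subrr mulr0 addr0 => /eqP; rewrite subr_eq0 => /eqP ->.
Qed.

Section OrbitDecomposition.
Variables (I : finType) (T : {set {set vec F}}) (base : I -> {set vec F}).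
Hypothesis base_line : forall v, base v \in lines F :\ ell F.
Hypothesis orbit_base_sub : forall v, orbit (base v) \subset T.
Hypothesis in_orbit_base : forall L, L \in T -> exists v, L \in orbit (base v).

Lemma orbits_in_type : [set X in O | X \subset T] = [set orbit (base v) | v : I].
Proof.
apply/setP => X; rewrite inE; apply/andP/imsetP => [[/imsetP [L _ ->] LT]|[v _ ->]].
  have [v Lv] := in_orbit_base (subsetP LT _ (orbit_refl L)).
  by exists v => //; rewrite (orbit_transl Lv).
by split; [apply: imset_f; apply: base_line | apply: orbit_base_sub].
Qed.

Lemma type_cover : T = \bigcup_(X in O | X \subset T) X.
Proof.
apply/setP => L; apply/idP/bigcupP => [LT|[X /andP [_ /subsetP XT] /XT //]].
have [v Lv] := in_orbit_base LT; exists (orbit (base v)) => //.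
by rewrite orbit_base_sub andbT; apply: imset_f; apply: base_line.
Qed.

Lemma card_orbits_in_type :
  injective (fun v => orbit (base v)) -> #|[set X in O | X \subset T]| = #|I|.
Proof. by move=> inj; rewrite orbits_in_type card_imset. Qed.

Lemma card_orbit_in_type :
  (forall v r s t, act (M r s t) (base v) = base v -> [/\ r = 0, s = 0 & t = 0]) ->
  forall X, X \in O -> X \subset T -> #|X| = (#|F| ^ 3)%N.
Proof.
move=> free X XO XT; have : X \in [set orbit (base v) | v : I].
  by rewrite -orbits_in_type inE XO XT.
by case/imsetP => v _ ->; apply: card_orbit_free; apply: free.
Qed.

End OrbitDecomposition.

Hypothesis two_neq0 : (2 : F) != 0.
Hypothesis cubic_no_root : forall x : F, x ^+ 3 + a * x ^+ 2 + b * x + c != 0.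

Lemma orbit_lineA o : orbit (lineA o 0) = [set lineA o u | u : F].
Proof.
apply/setP => L; apply/orbitP/imsetP => [[r [s [t ->]]]|[u _ ->]].
  by rewrite act_lineA; exists (0 + ell_coord o r s).
exists (if o is Some _ then 0 else u), (if o is Some _ then u else 0), 0.
by rewrite act_lineA; congr lineA; case: o => [m|] /=; ring.
Qed.

Lemma typeA_orbit o : typeA (span1 (ell_pt o)) = orbit (lineA o 0).
Proof. by rewrite typeA_nf orbit_lineA. Qed.

Lemma orbit_lineB d o : orbit (lineB d o 0 0) = [set lineB d o p.1 p.2 | p : F * F].
Proof.
apply/setP => L; apply/orbitP/imsetP => [[r [s [t ->]]]|[[be y] _ ->]].
  rewrite act_lineB; set u := _ + ell_coord _ _ _; set v := _ + incr2 _ _ _ _.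
  by exists (u, v).
rewrite /=; case: d => [l|]; case: o => [k|].
- have [kl|kln] := eqVneq k (- l).
  (* For the point (1,-l,0,0,0) the coefficient of t vanishes, and that of r is
     the cubic evaluated at l. *)
  + have := cubic_no_root l => Pl; subst k.
    set r := ((y / 2) ^+ 2 + (b + l ^+ 2) * (y / 2) - be) / (l ^+ 3 + a * l ^+ 2 + b * l + c).
    exists r, (y / 2 - l * r), 0.
    by rewrite act_lineB /incr0 /incr1 /incr2 /= {}/r; congr lineB; field_nz.
  + have lk : l + k != 0 by rewrite addrC addr_eq0.
    exists 0, (y / 2), (((y / 2) ^+ 2 + b * (y / 2) - k * l * (y / 2) - be) / (l + k)).
    by rewrite act_lineB /incr0 /incr1 /incr2 /=; congr lineB; field_nz.
- exists 0, (y / 2), (be - y / 2 * l).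
  by rewrite act_lineB /incr0 /incr1 /incr2 /=; congr lineB; field_nz.
- exists (y / 2), 0, (- be - k * ((y / 2) ^+ 2 - a * (y / 2))).
  by rewrite act_lineB /incr0 /incr1 /incr2 /=; congr lineB; field_nz.
- exists (y / 2), (be - (y / 2) ^+ 2 + a * (y / 2)), 0.
  by rewrite act_lineB /incr0 /incr1 /incr2 /=; congr lineB; field_nz.
Qed.

Lemma typeB_orbit d o : typeB_of d (span1 (ell_pt o)) = orbit (lineB d o 0 0).
Proof. by rewrite typeB_nf orbit_lineB. Qed.

Lemma addrI0 (x y : F) : x + y = x -> y = 0.
Proof. by move=> E; apply: (addrI x); rewrite E addr0. Qed.

Definition lineC_inv d (y1 y2 z1 z2 : F) :=
  dir5 d * z2 + dir4 d * z1 + (dir5 d * y2 + dir4 d * y1) ^+ 2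
  - (b * dir5 d + dir4 d ^+ 2) * y2 + (c * dir5 d + a * dir4 d ^+ 2) * y1.

Definition baseC d (v : F) :=
  lineC d 0 0 (if d is Some _ then 0 else v) (if d is Some _ then v else 0).

Lemma lineC_inv_orbit d (y1 y2 z1 z2 y1' y2' z1' z2' : F) :
  lineC d y1' y2' z1' z2' \in orbit (lineC d y1 y2 z1 z2) ->
  lineC_inv d y1' y2' z1' z2' = lineC_inv d y1 y2 z1 z2.
Proof.
case/orbitP => r [s [t]]; rewrite act_lineC => /lineC_inj [-> -> -> ->].
by rewrite /lineC_inv /incr0 /incr1 /incr2; case: d => [m|] /=; ring.
Qed.

Lemma lineC_in_orbit_baseC d (y1 y2 z1 z2 : F) :
  lineC d y1 y2 z1 z2 \in orbit (baseC d (lineC_inv d y1 y2 z1 z2)).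
Proof.
apply/orbitP; rewrite /baseC; case: d => [m|].
  exists y1, y2, (z1 - (y1 ^+ 2 - a * y1 + y2) * m + (2 * y1 * m + 2 * y2) * y1).
  by rewrite act_lineC /lineC_inv /incr0 /incr1 /incr2 /=; congr lineC; ring.
exists y1, y2, (- z2).
by rewrite act_lineC /lineC_inv /incr0 /incr1 /incr2 /=; congr lineC; ring.
Qed.

Lemma lineC_inv_baseC d (v : F) :
  lineC_inv d 0 0 (if d is Some _ then 0 else v) (if d is Some _ then v else 0) = v.
Proof. by rewrite /lineC_inv; case: d => [m|] /=; ring. Qed.

Lemma orbit_baseC_inj d : injective (fun v => orbit (baseC d v)).
Proof.
move=> v v' /= E; have : baseC d v' \in orbit (baseC d v) by rewrite E orbit_refl.
by move/lineC_inv_orbit; rewrite !lineC_inv_baseC.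
Qed.

Lemma lineC_stab d (y1 y2 z1 z2 r s t : F) :
  act (M r s t) (lineC d y1 y2 z1 z2) = lineC d y1 y2 z1 z2 -> [/\ r = 0, s = 0 & t = 0].
Proof.
rewrite act_lineC => /lineC_inj [/addrI0 r0 /addrI0 s0]; subst r s.
rewrite /incr0 /incr1 /incr2; simpr => /addrI0 t5 /addrI0 t4.
split => //; apply: (dir_scale_eq0 (d := d)); first by rewrite -[RHS]oppr0 -t4; ring.
by rewrite -t5; ring.
Qed.

Lemma orbit_lineC_sub d (y1 y2 z1 z2 : F) : orbit (lineC d y1 y2 z1 z2) \subset typeC_of d.
Proof. by apply/subsetP => L /orbitP [r [s [t ->]]]; rewrite act_lineC lineC_typeC. Qed.

Lemma four_neq0 : (4 : F) != 0.
Proof. by rewrite (_ : 4 = 2 * 2) ?mulf_neq0 //; ring. Qed.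

Definition lineD_inv (u1 u2 u3 v1 v2 v3 : F) : F * F * F :=
  ((4 * u1 - u3 ^+ 2 + 2 * a * u3 - 2 * v3) / 4, (2 * (u2 + v1) - u3 * v3) / 2,
   (4 * v2 - v3 ^+ 2 - 2 * b * v3 + 2 * c * u3) / 4).

Definition baseD (k : F * F * F) := lineD k.1.1 k.1.2 0 0 k.2 0.

Lemma lineD_inv_orbit (u1 u2 u3 v1 v2 v3 u1' u2' u3' v1' v2' v3' : F) :
  lineD u1' u2' u3' v1' v2' v3' \in orbit (lineD u1 u2 u3 v1 v2 v3) ->
  lineD_inv u1' u2' u3' v1' v2' v3' = lineD_inv u1 u2 u3 v1 v2 v3.
Proof.
case/orbitP => r [s [t]]; rewrite act_lineD => /lineD_inj [[-> -> ->] [-> -> ->]].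
by have := four_neq0; rewrite /lineD_inv /incr0 /incr1 => ?; congr (_, _, _); field_nz.
Qed.

Lemma lineD_inv_baseD k : lineD_inv k.1.1 k.1.2 0 0 k.2 0 = k.
Proof.
have := four_neq0; case: k => [[k1 k2] k3] /= ?.
by rewrite /lineD_inv; congr (_, _, _); field_nz.
Qed.

Lemma lineD_in_orbit_baseD (u1 u2 u3 v1 v2 v3 : F) :
  lineD u1 u2 u3 v1 v2 v3 \in orbit (baseD (lineD_inv u1 u2 u3 v1 v2 v3)).
Proof.
have := four_neq0 => ?; apply/orbitP.
exists (u3 / 2), (v3 / 2), ((2 * (u2 + v1) - u3 * v3) / 2 + u3 * v3 / 2 - u2).
by rewrite act_lineD /incr0 /incr1 /=; congr lineD; field_nz.
Qed.

Lemma orbit_baseD_inj : injective (fun k => orbit (baseD k)).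
Proof.
move=> k k' /= E; have : baseD k' \in orbit (baseD k) by rewrite E orbit_refl.
by move/lineD_inv_orbit; rewrite !lineD_inv_baseD.
Qed.

Lemma lineD_stab (u1 u2 u3 v1 v2 v3 r s t : F) :
  act (M r s t) (lineD u1 u2 u3 v1 v2 v3) = lineD u1 u2 u3 v1 v2 v3 ->
  [/\ r = 0, s = 0 & t = 0].
Proof.
rewrite act_lineD => /lineD_inj [[_ _ /addrI0/eqP r0] [/addrI0 t0 _ /addrI0/eqP s0]].
move: r0 s0; rewrite !mulf_eq0 (negPf two_neq0) /= => /eqP r0 /eqP s0; subst r s.
by move: t0; rewrite /incr0; simpr.
Qed.

Lemma orbit_lineD_sub (u1 u2 u3 v1 v2 v3 : F) : orbit (lineD u1 u2 u3 v1 v2 v3) \subset typeD F.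
Proof. by apply/subsetP => L /orbitP [r [s [t ->]]]; rewrite act_lineD lineD_typeD. Qed.

(* With e := r x3 + s x4 = 0, the combination x3 incr0 + x4 incr1 - (x2 + e) e is
   x3^2 (s - a r) + x4^2 (b s - c r), and r times the homogenised cubic at (x3, x4)
   is (x3^2 + b x4^2) e - x4 times it; that cubic has no zero besides (0, 0). *)
Lemma Mrst_fixed_off_pi r s t (x0 x1 x2 x3 x4 : F) :
  (x3 != 0) || (x4 != 0) -> M r s t *m col5 x0 x1 x2 x3 x4 = col5 x0 x1 x2 x3 x4 ->
  [/\ r = 0, s = 0 & t = 0].
Proof.
move=> x34; rewrite Mrst_col5 => /col5_inj [/addrI0 e0 /addrI0 e1 /addrI0 e2 _ _].
have e : r * x3 + s * x4 = 0.
  by apply/eqP; move/eqP: e2; rewrite /incr2 -!mulrA -mulrDr mulf_eq0 (negPf two_neq0).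
have quad : x3 ^+ 2 * (s - a * r) + x4 ^+ 2 * (b * s - c * r) = 0.
  rewrite (_ : _ + _ = x3 * incr0 r s t x2 x3 x4 + x4 * incr1 r s t x2 x3 x4
                       - (x2 + r * x3 + s * x4) * (r * x3 + s * x4)).
    by rewrite e0 e1 e; ring.
  by rewrite /incr0 /incr1; ring.
have [x40|x4n] := eqVneq x4 0.
  have x3n : x3 != 0 by move: x34; rewrite x40 eqxx orbF.
  have /eqP : r * x3 = 0 by rewrite -e x40; ring.
  rewrite mulf_eq0 (negPf x3n) orbF => /eqP r0.
  have /eqP : s * x3 ^+ 2 = 0 by rewrite -quad x40 r0; ring.
  rewrite mulf_eq0 expf_eq0 (negPf x3n) andbF orbF => /eqP s0.
  have /eqP : t * x3 = 0 by rewrite -[RHS]oppr0 -e1 x40 r0 s0 /incr1; ring.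
  by rewrite mulf_eq0 (negPf x3n) orbF => /eqP t0.
have cubic_neq0 : x3 ^+ 3 + a * x3 ^+ 2 * x4 + b * x3 * x4 ^+ 2 + c * x4 ^+ 3 != 0.
  rewrite (_ : _ + _ = x4 ^+ 3 * ((x3 / x4) ^+ 3 + a * (x3 / x4) ^+ 2 + b * (x3 / x4) + c)).
    by rewrite mulf_neq0 ?expf_neq0.
  by field.
have : r * (x3 ^+ 3 + a * x3 ^+ 2 * x4 + b * x3 * x4 ^+ 2 + c * x4 ^+ 3) =
       (x3 ^+ 2 + b * x4 ^+ 2) * (r * x3 + s * x4) -
       x4 * (x3 ^+ 2 * (s - a * r) + x4 ^+ 2 * (b * s - c * r)) by ring.
rewrite e quad !mulr0 subrr => /eqP; rewrite mulf_eq0 (negPf cubic_neq0) orbF => /eqP r0.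
have /eqP : s * x4 = 0 by rewrite -e r0; ring.
rewrite mulf_eq0 (negPf x4n) orbF => /eqP s0.
have /eqP : t * x4 = 0 by rewrite -e0 r0 s0 /incr0; ring.
by rewrite mulf_eq0 (negPf x4n) orbF => /eqP t0.
Qed.

(* A vector of a type (d) line is determined by its last two coordinates, which
   every element of G fixes; so a common vector of L and gL is fixed by g. *)
Lemma typeD_meet_act L r s t :
  L \in typeD F -> act (M r s t) L != L -> L :&: act (M r s t) L = zero_sp F.
Proof.
move=> /typeD_nf [u1 [u2 [u3 [v1 [v2 [v3 ->]]]]]] moved.
apply/setP => z; rewrite in_setI in_set1; apply/andP/eqP => [|->]; last first.
  by rewrite mem_span2_0; split => //; apply/imsetP; exists 0; rewrite ?mulmx0 ?mem_span2_0.
case=> /span2P [k [l ->]] /imsetP [_ /span2P [k' [l' ->]]].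
rewrite !lin_col5 => E; move: (E); rewrite Mrst_col5 => /col5_inj [_ _ _]; simpr => kk ll.
subst k' l'.
have [/andP [/eqP -> /eqP ->]|kl] := boolP ((k == 0) && (l == 0)).
  by simpr; rewrite col5_0.
have [r0 s0 t0] : [/\ r = 0, s = 0 & t = 0].
  by apply: Mrst_fixed_off_pi (esym E); simpr; rewrite -negb_and.
by move: moved; rewrite r0 s0 t0 Mrst0 act1 eqxx.
Qed.

Lemma orbit_typeD_spread X : X \in O -> X \subset typeD F -> partial_spread X.
Proof.
move=> /imsetP [L _ ->] /subsetP LD L1 L2 L1X L2X.
have /orbitP [r [s [t ->]]] : L2 \in orbit L1 by rewrite (orbit_transl L1X).
by rewrite eq_sym; apply: typeD_meet_act; apply: LD.
Qed.

Lemma baseC_in_lines d v : baseC d v \in lines F :\ ell F.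
Proof. by rewrite in_setD1 lineC_in_lines lineC_neq_ell. Qed.

Lemma orbit_baseC_sub d v : orbit (baseC d v) \subset typeC_of d.
Proof. exact: orbit_lineC_sub. Qed.

Lemma typeC_in_orbit_baseC d L : L \in typeC_of d -> exists v, L \in orbit (baseC d v).
Proof. by case/typeC_nf => y1 [y2 [z1 [z2 ->]]]; eexists; apply: lineC_in_orbit_baseC. Qed.

Lemma baseD_in_lines k : baseD k \in lines F :\ ell F.
Proof. by rewrite in_setD1 lineD_in_lines lineD_neq_ell. Qed.

Lemma orbit_baseD_sub k : orbit (baseD k) \subset typeD F.
Proof. exact: orbit_lineD_sub. Qed.

Lemma typeD_in_orbit_baseD L : L \in typeD F -> exists k, L \in orbit (baseD k).
Proof.
by case/typeD_nf => u1 [u2 [u3 [v1 [v2 [v3 ->]]]]]; eexists; apply: lineD_in_orbit_baseD.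
Qed.

End Group.

Section Indexing.
Variable F : finFieldType.

Lemma ell_points_nf : ell_points F = [set span1 (ell_pt o) | o : option F].
Proof.
apply/setP => P; rewrite inE; apply/andP/imsetP => [[]|[o _ ->]]; last first.
  split; first by rewrite inE; apply/existsP; exists (ell_pt o); rewrite ell_pt_neq0 eqxx.
  by apply/subsetP => z /span1P [k ->]; rewrite scale_col5 col5_in_ell; simpr.
rewrite inE => /existsP [x /andP [xn /eqP ->]] /subsetP /(_ _ (mem_span1 x)).
move: xn; rewrite [x]col5_coord col5_in_ell => + /and3P [/eqP x2 /eqP x3 /eqP x4].
rewrite x2 x3 x4 => /ell_pt_exists [o [k [kn ->]]].
by exists o => //; rewrite span1_scale.
Qed.

Lemma span1_ell_pt_inj : injective (fun o : option F => span1 (ell_pt o)).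
Proof.
move=> o o' /= E; have : ell_pt o \in span1 (ell_pt o') by rewrite -E mem_span1.
by case/span1P => k; apply: ell_pt_scale_inj.
Qed.

Lemma card_ell_points : #|ell_points F| = #|F|.+1.
Proof. by rewrite ell_points_nf card_imset ?card_option //; apply: span1_ell_pt_inj. Qed.

Definition solid_param (w : F) (i : nat) : option F :=
  if (i < #|F|)%N then Some (w ^+ i.-1) else if i == #|F| then Some 0 else None.

Lemma solid_paramE w i : solid w i = solid_of (solid_param w i).
Proof.
rewrite /solid /solid_param /solid_of; case: ifP => _; last case: ifP => _;
  by apply/setP => x; rewrite !inE /=; simpr; rewrite // eq_sym.
Qed.

Variable w : F.
Hypothesis w_prim : (#|F|.-1).-primitive_root w.

Lemma solid_param_inj i j : (1 <= i <= #|F|.+1)%N -> (1 <= j <= #|F|.+1)%N ->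
  solid_param w i = solid_param w j -> i = j.
Proof.
have q1 := prim_order_gt0 w_prim.
have wn : w != 0.
  apply/eqP => w0; have := prim_expr_order w_prim; rewrite w0 expr0n.
  by rewrite -(prednK q1) /= => /eqP; rewrite eq_sym oner_eq0.
move=> /andP [i1 iq] /andP [j1 jq]; rewrite /solid_param.
case: (ltnP i #|F|) => iq'; case: (ltnP j #|F|) => jq'.
- move=> [] /eqP; rewrite (eq_prim_root_expr w_prim) !modn_small;
    [by move=> /eqP; lia | lia | lia].
- by case: eqP => // _ [] /eqP; rewrite expf_eq0 (negPf wn) andbF.
- by case: eqP => // _ [] /esym /eqP; rewrite expf_eq0 (negPf wn) andbF.
- by case: eqP; case: eqP => //; lia.
Qed.

Lemma solid_param_surj d : exists2 i, (1 <= i <= #|F|.+1)%N & solid_param w i = d.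
Proof.
have q1 := prim_order_gt0 w_prim.
case: d => [m|]; last first.
  exists #|F|.+1; first lia.
  by rewrite /solid_param; case: ifP => [|_]; [lia | case: eqP => //; lia].
have [->|mn] := eqVneq m 0; first by exists #|F|; [lia | rewrite /solid_param ltnn eqxx].
have m1 : m ^+ #|F|.-1 = 1.
  by apply: (mulIf mn); rewrite mul1r -exprSr prednK ?expf_card //; lia.
have [k Ek] := prim_rootP w_prim m1.
have Hk : (k.+1 < #|F|)%N by have := ltn_ord k; lia.
by exists k.+1; [lia | rewrite /solid_param Hk /= Ek].
Qed.

End Indexing.

Lemma pchar_odd_two_neq0 (R : nzSemiRingType) (p : nat) :
  prime p -> odd p -> p \in [pchar R] -> (2 : R) != 0.
Proof.
move=> pp po pc; rewrite -(dvdn_pcharf pc 2).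
apply/negP => /(dvdn_leq (isT : (0 < 2)%N)); rewrite leq_eqVlt => /orP [/eqP p2|].
  by move: po; rewrite p2.
by rewrite ltnS leq_eqVlt ltnS leqn0 => /orP [/eqP p1|/eqP p0]; move: pp; rewrite ?p1 ?p0.
Qed.

Lemma irredp_no_root (F : fieldType) (p : {poly F}) (x : F) :
  irreducible_poly p -> (2 < size p)%N -> ~~ root p x.
Proof.
move=> irr sp; apply/negP; rewrite -dvdp_XsubCl => /(irredp_XsubCP irr) [] /eqp_size.
  by rewrite size_XsubC size_poly1.
by rewrite size_XsubC => e; rewrite -e in sp.
Qed.

Lemma irreducible_cubic_no_root (F : fieldType) (a b c : F) :
  irreducible_poly ('X^3 + a%:P * 'X^2 + b%:P * 'X + c%:P) ->
  forall x : F, x ^+ 3 + a * x ^+ 2 + b * x + c != 0.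
Proof.
move=> irr x; have sp : (3 < size ('X^3 + a%:P * 'X^2 + b%:P * 'X + c%:P)%R)%N.
  rewrite ltnNge; apply/negP => /(nth_default 0); rewrite !coefE /=; simpr.
  by move/eqP; rewrite oner_eq0.
apply: contraNN (irredp_no_root x irr (ltnW sp)) => /eqP px.
by rewrite /root !(hornerD, hornerCM, hornerXn, hornerX, hornerC) px.
Qed.

Section Classification.
Variables (F : finFieldType) (a b c w : F).
Hypothesis two_neq0 : (2 : F) != 0.
Hypothesis cubic_no_root : forall x : F, x ^+ 3 + a * x ^+ 2 + b * x + c != 0.
Hypothesis w_prim : (#|F|.-1).-primitive_root w.
Local Notation q := #|F|.
Local Notation O := (line_orbits a b c).

Lemma typeB_solid_param i P : typeB w i P = typeB_of (solid_param w i) P.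
Proof. by rewrite /typeB /typeB_of solid_paramE. Qed.

Lemma typeC_solid_param i : typeC w i = typeC_of (solid_param w i).
Proof. by rewrite /typeC /typeC_of solid_paramE. Qed.

Lemma typeA_line_orbit P : P \in ell_points F -> typeA P \in O /\ #|typeA P| = q.
Proof.
rewrite ell_points_nf => /imsetP [o _ ->]; split.
  by rewrite (typeA_orbit a b c) imset_f // in_setD1 lineA_in_lines lineA_neq_ell.
by rewrite typeA_nf card_imset //; apply: lineA_inj.
Qed.

Lemma card_typeA_orbits : #|[set typeA P | P in ell_points F]| = q.+1.
Proof.
by rewrite ell_points_nf -imset_comp card_imset ?card_option //; apply: typeA_ell_pt_inj.
Qed.

Lemma typeB_line_orbit i P :
  P \in ell_points F -> typeB w i P \in O /\ #|typeB w i P| = (q ^ 2)%N.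
Proof.
rewrite ell_points_nf typeB_solid_param => /imsetP [o _ ->]; split.
  rewrite (typeB_orbit two_neq0 cubic_no_root) imset_f //.
  by rewrite in_setD1 lineB_in_lines lineB_neq_ell.
rewrite typeB_nf card_imset ?card_prod ?expnS ?expn0 ?muln1 //.
by move=> [be y] [be' y'] /= /lineB_inj [-> ->].
Qed.

Lemma card_typeB_orbits :
  #|[set typeB w (nat_of_ord i).+1 P | i in [set: 'I_q.+1], P in ell_points F]| =
  (q.+1 ^ 2)%N.
Proof.
rewrite curry_imset2X card_in_imset ?cardsX ?cardsT ?card_ord ?card_ell_points //.
move=> [i P] [j P']; rewrite !in_setX !ell_points_nf /=.
move=> /andP [_ /imsetP [o _ ->]] /andP [_ /imsetP [o' _ ->]].
rewrite !typeB_solid_param => /typeB_of_inj [eij ->].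
have := solid_param_inj w_prim _ _ eij; rewrite !ltn0Sn !ltn_ord => /(_ isT isT) [] ij.
by congr pair; apply: val_inj.
Qed.

Lemma typeC_orbits i :
  [/\ #|[set X in O | X \subset typeC w i]| = q,
      forall X, X \in O -> X \subset typeC w i -> #|X| = (q ^ 3)%N &
      typeC w i = \bigcup_(X in O | X \subset typeC w i) X].
Proof.
rewrite typeC_solid_param; set d := solid_param w i.
have base_line := @baseC_in_lines F d; have sub := orbit_baseC_sub a b c d.
have cov := @typeC_in_orbit_baseC F a b c d.
split; last exact: type_cover base_line sub cov.
  exact: card_orbits_in_type base_line sub cov (@orbit_baseC_inj F a b c d).
by apply: card_orbit_in_type base_line sub cov _ => v r s t; apply: lineC_stab.
Qed.

Lemma typeD_orbits :
  [/\ #|[set X in O | X \subset typeD F]| = (q ^ 3)%N,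
      forall X, X \in O -> X \subset typeD F -> #|X| = (q ^ 3)%N /\ partial_spread X &
      typeD F = \bigcup_(X in O | X \subset typeD F) X].
Proof.
have base_line := @baseD_in_lines F; have sub := orbit_baseD_sub a b c.
have cov := typeD_in_orbit_baseD a b c two_neq0.
split; last exact: type_cover base_line sub cov.
  have inj := orbit_baseD_inj (a := a) (b := b) (c := c) two_neq0.
  by rewrite (card_orbits_in_type base_line sub cov inj) !card_prod expnS expnS expn1 mulnA.
move=> X XO XD; split; last exact: orbit_typeD_spread.
by apply: card_orbit_in_type base_line sub cov _ X XO XD => v r s t; apply: lineD_stab.
Qed.

Lemma line_orbits_types X : X \in O ->
  (exists2 P, P \in ell_points F & X = typeA P) \/
  (exists i P, [/\ (1 <= i <= q.+1)%N, P \in ell_points F & X = typeB w i P]) \/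
  (exists2 i, (1 <= i <= q.+1)%N & X \subset typeC w i) \/
  X \subset typeD F.
Proof.
case/imsetP => L; rewrite in_setD1 => /andP [Ln Ll] ->.
case: (line_nfP Ll Ln) => [o u|d o be y|d y1 y2 z1 z2|u1 u2 u3 v1 v2 v3] ->.
- left; exists (span1 (ell_pt o)); first by rewrite ell_points_nf; apply/imsetP; exists o.
  rewrite (typeA_orbit a b c); apply: orbit_transl.
  by rewrite orbit_lineA; apply/imsetP; exists u.
- right; left; have [i Hi Ei] := solid_param_surj w_prim d.
  exists i, (span1 (ell_pt o)); split => //.
    by rewrite ell_points_nf; apply/imsetP; exists o.
  rewrite typeB_solid_param Ei (typeB_orbit two_neq0 cubic_no_root); apply: orbit_transl.
  by rewrite (orbit_lineB two_neq0 cubic_no_root); apply/imsetP; exists (be, y).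
- right; right; left; have [i Hi Ei] := solid_param_surj w_prim d.
  by exists i; rewrite // typeC_solid_param Ei (orbit_lineC_sub a b c).
- by right; right; right; apply: (orbit_lineD_sub a b c).
Qed.

End Classification.

Unset Implicit Arguments.
Set Strict Implicit.

Theorem lemma2p4 (F : finFieldType) (p : nat)
  (p_prime : prime p) (p_odd : odd p) (p_char : p \in [pchar F])
  (w : F) (w_prim : (#|F|.-1).-primitive_root w)
  (a b c : F)
  (irr : irreducible_poly ('X^3 + a%:P * 'X^2 + b%:P * 'X + c%:P)) :
  let q := #|F| in
  let O := line_orbits a b c in
  (* (a) *)
  (forall P, P \in ell_points F -> typeA P \in O /\ #|typeA P| = q) /\
  #|[set typeA P | P in ell_points F]| = q.+1 /\
  (* (b) *)
  (forall i P, (1 <= i <= q.+1)%N -> P \in ell_points F ->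
     typeB w i P \in O /\ #|typeB w i P| = (q ^ 2)%N) /\
  #|[set typeB w (nat_of_ord i).+1 P | i in [set: 'I_(q.+1)], P in ell_points F]| = (q.+1 ^ 2)%N /\
  (* (c) *)
  (forall i, (1 <= i <= q.+1)%N ->
     #|[set X in O | X \subset typeC w i]| = q /\
     (forall X, X \in O -> X \subset typeC w i -> #|X| = (q ^ 3)%N) /\
     typeC w i = \bigcup_(X in O | X \subset typeC w i) X) /\
  (* (d) *)
  #|[set X in O | X \subset typeD F]| = (q ^ 3)%N /\
  (forall X, X \in O -> X \subset typeD F -> #|X| = (q ^ 3)%N /\ partial_spread X) /\
  typeD F = \bigcup_(X in O | X \subset typeD F) X /\
  (* these are all the orbits on lines other than ell *)
  (forall X, X \in O ->
     (exists2 P, P \in ell_points F & X = typeA P) \/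
     (exists i P, [/\ (1 <= i <= q.+1)%N, P \in ell_points F & X = typeB w i P]) \/
     (exists2 i, (1 <= i <= q.+1)%N & X \subset typeC w i) \/
     X \subset typeD F).
Proof.
move=> q O; have two := pchar_odd_two_neq0 p_prime p_odd p_char.
have cubic := irreducible_cubic_no_root irr.
have [cardD partD coverD] := typeD_orbits two cubic.
split; first exact: typeA_line_orbit.
split; first exact: card_typeA_orbits.
split; first by move=> i P _; apply: typeB_line_orbit.
split; first exact: card_typeB_orbits.
split; first by move=> i _; have [] := @typeC_orbits F a b c w i.
by do 3!split => //; apply: line_orbits_types.
Qed.
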